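(* Let $\mathcal{A}\subset\mathbb{C}^n$ be a set of atoms whose convex hull is compact, centrally symmetric, and contains a ball of positive radius around the origin. Let $x^\star,w\in\mathbb{C}^n$, $y=x^\star+w$, and let $\tau>\|w\|_{\mathcal{A}}^*$. If $\hat{x}$ is the optimal solution of $$\operatorname*{minimize}_{x\in\mathbb{C}^n}\ \tfrac{1}{2}\|x-y\|_2^2+\tau\|x\|_{\mathcal{A}},$$ then $$\frac{1}{n}\|\hat{x}-x^\star\|_2^2\le\frac{1}{n}\left(\tau\|x^\star\|_{\mathcal{A}}-\langle x^\star,w\rangle\right)\le\frac{2\tau}{n}\|x^\star\|_{\mathcal{A}}.$$
   Context: The atomic norm is the gauge $\|x\|_{\mathcal{A}}=\inf\{t>0: x\in t\,\operatorname{conv}(\mathcal{A})\}$. The real inner product on $\mathbb{C}^n$ is $\langle x,z\rangle=\operatorname{Re}(z^*x)$. The dual atomic norm is $\|z\|_{\mathcal{A}}^*=\sup_{a\in\mathcal{A}}\langle z,a\rangle$. *)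

From HB Require Import structures.
From mathcomp Require Import all_boot all_order all_algebra complex.
From mathcomp Require Import all_classical all_reals all_analysis.
Import numFieldNormedType.Exports.

Set Implicit Arguments.
Unset Strict Implicit.
Unset Printing Implicit Defensive.
Import Order.TTheory GRing.Theory Num.Theory.
Local Open Scope ring_scope.
Local Open Scope complex_scope.
Local Open Scope classical_set_scope.

(* Standard (norm) topology on C = R[i], so that C^n = 'cV[R[i]]_n gets the
   usual (product / norm) topology from MathComp-Analysis. *)
HB.instance Definition _ (R : rcfType) := NormedModule.copy R[i] (R[i])^o.

Section AtomicNorm.
Variables (R : realType) (n : nat).

Definition rinner (x z : 'cV[R[i]]_n) : R :=
  \sum_(k < n) complex.Re ((z k 0)^* * x k 0).

Definition sqnorm2 (x : 'cV[R[i]]_n) : R := rinner x x.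

Definition convex_hull (A : set 'cV[R[i]]_n) : set 'cV[R[i]]_n :=
  [set x | exists (k : nat) (l : 'I_k -> R) (a : 'I_k -> 'cV[R[i]]_n),
     [/\ (forall j, 0 <= l j), \sum_(j < k) l j = 1, (forall j, A (a j))
       & x = \sum_(j < k) (l j)%:C *: a j]].

Definition atomic_norm (A : set 'cV[R[i]]_n) (x : 'cV[R[i]]_n) : R :=
  inf [set t : R | 0 < t /\ exists2 u, convex_hull A u & x = t%:C *: u].

Definition dual_atomic_norm (A : set 'cV[R[i]]_n) (z : 'cV[R[i]]_n) : R :=
  sup [set rinner z a | a in A].

End AtomicNorm.

(* Let e = x̂ - x*.  Comparing the objective at x̂ with its value at the point
   (1 - t) x̂ + t x* of the segment towards x*, and using convexity of the
   gauge, gives for every t in (0, 1]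
     ||e||^2 - <e, w> <= t/2 ||e||^2 + tau (||x*||_A - ||x̂||_A);
   letting t -> 0 and bounding <x̂, w> <= tau ||x̂||_A yields the first
   inequality.  That bound holds because <., w> <= ||w||_A^* < tau on conv A,
   hence <., w> <= tau t on every dilate t conv A; compactness makes the dual
   norm a finite supremum and the ball around 0 makes every dilation set
   nonempty.  The second inequality is the same bound for -w, which is where
   central symmetry enters. *)
From HB Require Import structures.
From mathcomp Require Import all_boot all_order all_algebra complex.
From mathcomp Require Import all_classical all_reals all_analysis.
From mathcomp Require Import ring lra.
Import numFieldNormedType.Exports.
Import Order.TTheory GRing.Theory Num.Theory.

Set Implicit Arguments.
Unset Strict Implicit.
Unset Printing Implicit Defensive.
Local Open Scope ring_scope.
Local Open Scope complex_scope.
Local Open Scope classical_set_scope.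

Section RealInnerProduct.
Context {R : realType} {n : nat}.
Implicit Types x y z : 'cV[R[i]]_n.

Lemma rinnerC x z : rinner x z = rinner z x.
Proof.
apply: eq_bigr => k _; case: (x k 0) => a b; case: (z k 0) => c d /=; ring.
Qed.

Lemma rinnerDl x y z : rinner (x + y) z = rinner x z + rinner y z.
Proof.
rewrite /rinner -big_split /=; apply: eq_bigr => k _; rewrite mxE.
case: (x k 0) => a b; case: (y k 0) => a' b'; case: (z k 0) => c d /=; ring.
Qed.

Lemma rinnerZl (c : R) x z : rinner (c%:C *: x) z = c * rinner x z.
Proof.
rewrite /rinner mulr_sumr; apply: eq_bigr => k _; rewrite mxE.
case: (x k 0) => a b; case: (z k 0) => e d /=; ring.
Qed.

Lemma rinnerNl x z : rinner (- x) z = - rinner x z.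
Proof.
rewrite /rinner -sumrN; apply: eq_bigr => k _; rewrite mxE.
case: (x k 0) => a b; case: (z k 0) => e d /=; ring.
Qed.

Lemma rinner0l z : rinner 0 z = 0.
Proof.
rewrite /rinner big1 // => k _; rewrite mxE.
case: (z k 0) => e d /=; ring.
Qed.

Lemma rinner0r z : rinner z 0 = 0.
Proof. by rewrite rinnerC rinner0l. Qed.

Lemma rinnerBl x y z : rinner (x - y) z = rinner x z - rinner y z.
Proof. by rewrite rinnerDl rinnerNl. Qed.

Lemma rinnerBr x y z : rinner z (x - y) = rinner z x - rinner z y.
Proof. by rewrite rinnerC rinnerBl !(rinnerC z). Qed.

Lemma rinnerZr (c : R) x z : rinner z (c%:C *: x) = c * rinner z x.
Proof. by rewrite rinnerC rinnerZl rinnerC. Qed.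

Lemma rinnerNr x z : rinner z (- x) = - rinner z x.
Proof. by rewrite rinnerC rinnerNl rinnerC. Qed.

Lemma rinner_suml (I : Type) (s : seq I) (F : I -> 'cV[R[i]]_n) z :
  rinner (\sum_(j <- s) F j) z = \sum_(j <- s) rinner (F j) z.
Proof.
elim: s => [|a s IH]; first by rewrite !big_nil rinner0l.
by rewrite !big_cons rinnerDl IH.
Qed.

Lemma sqnorm2_ge0 x : 0 <= sqnorm2 x.
Proof.
apply: sumr_ge0 => k _; case: (x k 0) => a b /=.
have -> : a * a - - b * b = a ^+ 2 + b ^+ 2 by ring.
by rewrite addr_ge0 ?sqr_ge0.
Qed.

Lemma sqnorm2Z (c : R) x : sqnorm2 (c%:C *: x) = c ^+ 2 * sqnorm2 x.
Proof. by rewrite /sqnorm2 rinnerZl rinnerZr mulrA expr2. Qed.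

Lemma sqnorm2B x y : sqnorm2 (x - y) = sqnorm2 x - 2 * rinner x y + sqnorm2 y.
Proof. rewrite /sqnorm2 rinnerBl !rinnerBr (rinnerC y x); ring. Qed.

End RealInnerProduct.

Lemma Re_continuous (R : realType) : continuous (fun z : R[i] => complex.Re z).
Proof.
move=> z B /= /nbhs_ballP [e e0 eB].
apply/nbhs_ballP; exists e%:C; first by rewrite /=; simpc.
move=> z' /= hz; apply: eB; move: hz.
rewrite -!ball_normE /= normc_def ltcR -raddfB /=; apply: le_lt_trans.
rewrite -sqrtr_sqr; apply: ler_wsqrtr.
by rewrite lerDl sqr_ge0.
Qed.

Lemma sum_continuous (T : topologicalType) (R : realType) (I : Type)
  (s : seq I) (F : I -> T -> R) : (forall k, continuous (F k)) ->
  continuous (fun x => \sum_(k <- s) F k x).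
Proof.
move=> Fc; elim: s => [|k s IH].
  under [X in continuous X]funext do rewrite big_nil.
  exact: cst_continuous.
under [X in continuous X]funext do rewrite big_cons.
by move=> x; apply: (@continuousD _ R^o); [exact: Fc | exact: IH].
Qed.

Lemma rinnerl_continuous (R : realType) n (w : 'cV[R[i]]_n) :
  continuous (fun x => rinner x w).
Proof.
apply: sum_continuous => k x.
apply: (@continuous_comp _ _ _ (fun y : 'cV[R[i]]_n => (w k 0)^* * y k 0)
   (fun z : R[i] => complex.Re z)); last exact: Re_continuous.
apply: (@continuousM R[i] _ (fun=> (w k 0)^*) (fun y : 'cV[R[i]]_n => y k 0)).
  exact: cst_continuous.
exact: coord_continuous.
Qed.

Lemma compact_rinner_ubound (R : realType) n (S : set 'cV[R[i]]_n)
  (w : 'cV[R[i]]_n) : compact S -> exists M, forall a, S a -> rinner a w <= M.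
Proof.
move=> cS.
have wc := continuous_subspaceT (A := S) (rinnerl_continuous (w := w)).
have [M [_ HM]] := compact_bounded (continuous_compact wc cS).
exists (`|M| + 1) => a Sa; apply: le_trans (ler_norm _) _.
apply: (HM (`|M| + 1)); last by exists a.
by apply: le_lt_trans (ler_norm M) _; rewrite ltrDl.
Qed.

Section ConvexHull.
Context {R : realType} {n : nat} {A : set 'cV[R[i]]_n}.

Lemma sub_convex_hull : A `<=` convex_hull A.
Proof.
move=> a Aa; exists 1%N, (fun=> 1), (fun=> a); split => //.
  by rewrite big_ord1.
by rewrite big_ord1 scale1r.
Qed.

Lemma convex_hull_neq0 : convex_hull A !=set0 -> A !=set0.
Proof.
case=> _ [[|k]] [l [a [_ ls aA _]]]; last by exists (a ord0).
by move: ls; rewrite big_ord0 => /eqP; rewrite eq_sym oner_eq0.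
Qed.

Lemma convex_hull_conv u v (l : R) :
  convex_hull A u -> convex_hull A v -> 0 <= l -> l <= 1 ->
  convex_hull A (l%:C *: u + (1 - l)%:C *: v).
Proof.
case=> k1 [l1 [a1 [l1p l1s a1A ->]]]; case=> k2 [l2 [a2 [l2p l2s a2A ->]]].
move=> l0 le1.
have sl j : fintype.split (lshift k2 j) = inl j := unsplitK (inl j).
have sr j : fintype.split (rshift k1 j) = inr j := unsplitK (inr j).
exists (k1 + k2)%N,
  (fun j => match fintype.split j with
            | inl j1 => l * l1 j1 | inr j2 => (1 - l) * l2 j2 end),
  (fun j => match fintype.split j with inl j1 => a1 j1 | inr j2 => a2 j2 end).
split.
- by move=> j; case: (fintype.split j) => j'; apply: mulr_ge0 => //; lra.
- rewrite big_split_ord /=.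
  under eq_bigr do rewrite sl.
  under [X in _ + X]eq_bigr do rewrite sr.
  by rewrite -!mulr_sumr l1s l2s; ring.
- by move=> j; case: (fintype.split j).
- rewrite big_split_ord /= !scaler_sumr.
  by congr (_ + _); apply: eq_bigr => j _; rewrite ?sl ?sr rmorphM scalerA.
Qed.

Lemma convex_hull_rinner_le (w : 'cV[R[i]]_n) (c : R) :
  (forall a, A a -> rinner w a <= c) ->
  forall u, convex_hull A u -> rinner w u <= c.
Proof.
move=> Ac _ [k [l [a [lp ls aA ->]]]].
rewrite rinnerC rinner_suml -[c]mul1r -ls mulr_suml.
apply: ler_sum => j _; rewrite rinnerZl rinnerC.
exact: ler_wpM2l (Ac _ (aA j)).
Qed.

Lemma rinner_le_dual_atomic_norm (w : 'cV[R[i]]_n) :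
  compact (convex_hull A) -> A !=set0 ->
  forall a, A a -> rinner w a <= dual_atomic_norm A w.
Proof.
move=> cA [a0 Aa0] a Aa; apply: sup_upper_bound; last by exists a.
have [M HM] := compact_rinner_ubound w cA.
split; first by exists (rinner w a0), a0.
by exists M => _ [b Ab <-]; rewrite rinnerC; apply: HM; apply: sub_convex_hull.
Qed.

End ConvexHull.

Definition atomic_scales {R : realType} {n : nat} (A : set 'cV[R[i]]_n)
  (x : 'cV[R[i]]_n) : set R :=
  [set t : R | 0 < t /\ exists2 u, convex_hull A u & x = t%:C *: u].

Section AtomicNorm.
Context {R : realType} {n : nat} {A : set 'cV[R[i]]_n}.
Hypothesis hball : exists2 r : R, 0 < r &
  forall x, sqnorm2 x < r ^+ 2 -> convex_hull A x.

Lemma convex_hull0 : convex_hull A 0.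
Proof.
by have [r r0 hr] := hball; apply: hr; rewrite /sqnorm2 rinner0l exprn_gt0.
Qed.

(* The dilation (|x|^2 + 1) / r brings x inside the ball of radius r. *)
Lemma atomic_scales_neq0 x : atomic_scales A x !=set0.
Proof.
have [r r0 hr] := hball; set q := sqnorm2 x.
have q0 : 0 <= q by apply: sqnorm2_ge0.
have t0 : 0 < (q + 1) / r by apply: divr_gt0 => //; lra.
exists ((q + 1) / r); split => //.
exists (((q + 1) / r)^-1%:C *: x); last first.
  by rewrite scalerA -rmorphM mulfV ?scale1r // gt_eqF.
apply: hr; rewrite sqnorm2Z -/q invf_div.
have p0 : 0 < (r / (q + 1)) ^+ 2 by rewrite exprn_gt0 // divr_gt0 //; lra.
apply: (@lt_le_trans _ _ ((r / (q + 1)) ^+ 2 * (q + 1) ^+ 2)).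
  by rewrite ltr_pM2l //; nra.
by rewrite -exprMn divfK // gt_eqF //; lra.
Qed.

Lemma has_inf_atomic_scales x : has_inf (atomic_scales A x).
Proof.
split; first exact: atomic_scales_neq0.
by exists 0 => t [t0 _]; apply: ltW.
Qed.

Lemma atomic_norm_le x t : atomic_scales A x t -> atomic_norm A x <= t.
Proof. exact/ge_inf/(has_inf_atomic_scales x).2. Qed.

Lemma atomic_norm_convex a b (s : R) : 0 <= s -> s <= 1 ->
  atomic_norm A ((1 - s)%:C *: a + s%:C *: b)
    <= (1 - s) * atomic_norm A a + s * atomic_norm A b.
Proof.
move=> s0 s1; apply/ler_addgt0Pr => e e0.
have [ta [ta0 [ua Cua ->]] hta] := inf_adherent e0 (has_inf_atomic_scales a).
have [tb [tb0 [ub Cub ->]] htb] := inf_adherent e0 (has_inf_atomic_scales b).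
pose T := (1 - s) * ta + s * tb.
have T0 : 0 < T by rewrite /T; case: (ltrgtP s 1) => [hs|hs|->]; [nra|lra|lra].
pose l := (1 - s) * ta / T.
have e1 : T * l = (1 - s) * ta by rewrite mulrC /l divfK // gt_eqF.
have e2 : T * (1 - l) = s * tb by rewrite mulrBr mulr1 e1 /T; ring.
have l0 : 0 <= l by apply: divr_ge0; nra.
have l1 : l <= 1.
  have : 0 <= T * (1 - l) by rewrite e2; nra.
  by rewrite pmulr_rge0 //; lra.
have -> : (1 - s)%:C *: (ta%:C *: ua) + s%:C *: (tb%:C *: ub)
    = T%:C *: (l%:C *: ua + (1 - l)%:C *: ub).
  by rewrite scalerDr !scalerA -!rmorphM e1 e2.
apply: le_trans (_ : T <= _); last by rewrite /T; nra.
apply: atomic_norm_le; split => //.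
by exists (l%:C *: ua + (1 - l)%:C *: ub); first exact: convex_hull_conv.
Qed.

Lemma rinner_le_atomic_norm (w : 'cV[R[i]]_n) (c : R) : 0 < c ->
  (forall u, convex_hull A u -> rinner w u <= c) ->
  forall x, rinner w x <= c * atomic_norm A x.
Proof.
move=> c0 hc x; rewrite -ler_pdivrMl //.
apply: lb_le_inf (atomic_scales_neq0 x) _ => t [t0 [u Cu ->]].
by rewrite rinnerZr ler_pdivrMl // mulrC ler_pM2r // hc.
Qed.

End AtomicNorm.

Lemma ler_of_forall_small (R : realFieldType) (x y z : R) : 0 <= z ->
  (forall t, 0 < t -> t <= 1 -> x <= y + t * z) -> x <= y.
Proof.
move=> z0 h; apply/ler_addgt0Pr => e e0.
pose t := e / (z + e + 1).
have et : t * (z + e + 1) = e by rewrite /t divfK // gt_eqF //; lra.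
have t0 : 0 < t by apply: divr_gt0 => //; lra.
have := h t t0; nra.
Qed.

Section ProximalError.
Variables (R : realType) (n : nat) (f : 'cV[R[i]]_n -> R) (tau : R).
Variables (xstar w xhat : 'cV[R[i]]_n).
Hypothesis tau_ge0 : 0 <= tau.
Hypothesis f_convex : forall s, 0 <= s -> s <= 1 ->
  f ((1 - s)%:C *: xhat + s%:C *: xstar) <= (1 - s) * f xhat + s * f xstar.
Hypothesis hopt : forall x,
  2^-1 * sqnorm2 (xhat - (xstar + w)) + tau * f xhat
    <= 2^-1 * sqnorm2 (x - (xstar + w)) + tau * f x.

Lemma prox_segment_le (t : R) : 0 < t -> t <= 1 ->
  sqnorm2 (xhat - xstar) - rinner w (xhat - xstar)
    <= t / 2 * sqnorm2 (xhat - xstar) + tau * (f xstar - f xhat).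
Proof.
move=> t0 t1; set e := xhat - xstar; set q := sqnorm2 e.
have := hopt ((1 - t)%:C *: xhat + t%:C *: xstar).
have -> : (1 - t)%:C *: xhat + t%:C *: xstar - (xstar + w)
    = (e - w) - t%:C *: e.
  rewrite /e rmorphB /= scalerBl scale1r scalerBr !opprD !opprK !addrA.
  by rewrite [xhat - _ + _ - xstar]addrAC [_ + t%:C *: xstar - w]addrAC
    [xhat - _ - xstar]addrAC [xhat - xstar - _ - w]addrAC.
have -> : xhat - (xstar + w) = e - w by rewrite /e opprD addrA.
rewrite [sqnorm2 (_ - t%:C *: e)]sqnorm2B sqnorm2Z rinnerZr rinnerBl
  -[rinner e e]/q -/q => h.
have hN := ler_wpM2l tau_ge0 (f_convex (ltW t0) t1).
have : t * (q - rinner w e) <= t * (t / 2 * q + tau * (f xstar - f xhat)).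
  by nra.
by rewrite ler_pM2l.
Qed.

Lemma prox_error_le : rinner w xhat <= tau * f xhat ->
  sqnorm2 (xhat - xstar) <= tau * f xstar - rinner xstar w.
Proof.
move=> hw; have q0 := sqnorm2_ge0 (xhat - xstar).
apply: (@ler_of_forall_small _ _ _ (sqnorm2 (xhat - xstar) / 2)) => [|t t0 t1].
  by rewrite divr_ge0.
have := prox_segment_le t0 t1; rewrite rinnerBr (rinnerC xstar) mulrA; lra.
Qed.

End ProximalError.

Theorem proposition1 (R : realType) (n : nat) (A : set 'cV[R[i]]_n)
  (hcompact : compact (convex_hull A))
  (hsym : forall x, convex_hull A x -> convex_hull A (- x))
  (hball : exists2 r : R, 0 < r &
             forall x, sqnorm2 x < r ^+ 2 -> convex_hull A x)
  (xstar w : 'cV[R[i]]_n) (tau : R)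
  (htau : dual_atomic_norm A w < tau)
  (xhat : 'cV[R[i]]_n)
  (hopt : forall x : 'cV[R[i]]_n,
     2^-1 * sqnorm2 (xhat - (xstar + w)) + tau * atomic_norm A xhat
     <= 2^-1 * sqnorm2 (x - (xstar + w)) + tau * atomic_norm A x) :
  n%:R^-1 * sqnorm2 (xhat - xstar)
    <= n%:R^-1 * (tau * atomic_norm A xstar - rinner xstar w)
  /\ n%:R^-1 * (tau * atomic_norm A xstar - rinner xstar w)
    <= 2 * tau / n%:R * atomic_norm A xstar.
Proof.
have C0 := convex_hull0 hball.
have A0 := convex_hull_neq0 (ex_intro _ _ C0).
have hD := convex_hull_rinner_le (rinner_le_dual_atomic_norm w hcompact A0).
have tau0 : 0 < tau by have := hD _ C0; rewrite rinner0r; lra.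
have hw u : convex_hull A u -> rinner w u <= tau.
  by move=> Cu; rewrite (le_trans (hD _ Cu)) ?ltW.
have hNw u : convex_hull A u -> rinner (- w) u <= tau.
  by move=> Cu; rewrite rinnerNl -rinnerNr; apply: hw; apply: hsym.
have hn : 0 <= n%:R^-1 :> R by rewrite invr_ge0 ler0n.
split.
  apply: ler_wpM2l => //; apply: prox_error_le (ltW tau0) _ hopt _.
    exact: atomic_norm_convex.
  exact: rinner_le_atomic_norm.
have := rinner_le_atomic_norm hball tau0 hNw xstar.
rewrite rinnerNl (rinnerC w) => hs.
rewrite mulrAC [_ / _]mulrC -mulrA; apply: ler_wpM2l => //; lra.
Qed.
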